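(* Let $k\ge 2$, $X_1,\dots,X_k\in\mathcal{M}_d$ and $j\in\{1,\dots,k\}$. Then $$\operatorname{tr}_{\{1,\dots,k\}\setminus\{k\}}\big[(k\,k\!-\!1\cdots 1)^{T_j}(X_1\otimes\cdots\otimes X_k)\big]=\begin{cases}X_1\cdots X_j^T\cdots X_{k-1}X_k & j\ne k,\\ (X_1\cdots X_{k-1})^TX_k & j=k,\end{cases}$$ and $$\operatorname{tr}_{\{1,\dots,k\}\setminus\{1\}}\big[(1\,2\cdots k)^{T_j}(X_1\otimes\cdots\otimes X_k)\big]=\begin{cases}X_kX_{k-1}\cdots X_j^T\cdots X_1 & j\ne 1,\\ X_k^TX_{k-1}\cdots X_2X_1 & j=1.\end{cases}$$
   Context: $\mathcal{M}_d$ denotes complex $d\times d$ matrices. A permutation $\sigma\in S_k$ acts on $(\mathbb{C}^d)^{\otimes k}$ by $\sigma|v_1\rangle\otimes\cdots\otimes|v_k\rangle=|v_{\sigma^{-1}(1)}\rangle\otimes\cdots\otimes|v_{\sigma^{-1}(k)}\rangle$, extended linearly; permutations are in cycle notation, so $(1\,2\cdots k)$ maps $1\to2\to\cdots\to k\to 1$, and $(k\,k\!-\!1\cdots1)=(1\,2\cdots k)^{-1}$. $T_j$ is the partial transpose on the $j$-th tensor factor with respect to a fixed orthonormal basis, and $X^T$ is the transpose in that basis. $\operatorname{tr}_{\{1,\dots,k\}\setminus\{i\}}$ is the partial trace over all tensor factors except the $i$-th, yielding an element of $\mathcal{M}_d$. *)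

From mathcomp Require Import all_boot all_order all_algebra all_fingroup.
From mathcomp Require Import reals complex.
Set Implicit Arguments. Unset Strict Implicit. Unset Printing Implicit Defensive.
Import GRing.Theory.
Local Open Scope ring_scope.

(* Tensor factors are numbered 0..k-1 (paper: 1..k); basis indices 0..d-1.
   A basis vector of (C^d)^{\otimes k} is indexed by a multi-index
   a : {ffun 'I_k -> 'I_d}, i.e. |e_{a 0}> \otimes ... \otimes |e_{a (k-1)}>. *)
Definition midx (d k : nat) := {ffun 'I_k -> 'I_d}.

(* Operators on (C^d)^{\otimes k}, given by their matrix entries <a|M|b>. *)
Definition op (C : Type) (d k : nat) := midx d k -> midx d k -> C.

Section Ops.
Variables (C : comNzRingType) (d k : nat).

Definition op_mul (M N : op C d k) : op C d k :=
  fun a c => \sum_(b : midx d k) M a b * N b c.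

Definition tensor (X : 'I_k -> 'M[C]_d) : op C d k :=
  fun a b => \prod_(i < k) X i (a i) (b i).

(* Action of sigma: sigma |v_1..v_k> = |v_{sigma^-1 1} .. v_{sigma^-1 k}>,
   hence <a|sigma|b> = prod_i [a_i = b_{sigma^-1 i}]. *)
Definition perm_op (s : {perm 'I_k}) : op C d k :=
  fun a b => if [forall i, a i == b ((s^-1)%g i)] then 1 else 0.

Definition upd (a : midx d k) (j : 'I_k) (x : 'I_d) : midx d k :=
  [ffun i => if i == j then x else a i].

Definition ptrans (j : 'I_k) (M : op C d k) : op C d k :=
  fun a b => M (upd a j (b j)) (upd b j (a j)).

Definition ptrace_except (i : 'I_k) (M : op C d k) : 'M[C]_d :=
  \matrix_(p, q) \sum_(a : midx d k | a i == p) M a (upd a i q).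

End Ops.

Definition mxprod (C : comNzRingType) (d : nat) (s : seq 'M[C]_d) : 'M[C]_d :=
  foldr (@mulmx C d d d) 1%:M s.

(* The cycle (1 2 ... k) in 0-based indexing: i |-> i+1 mod k. *)
Definition cycle_up (k : nat) : {perm 'I_k} := perm (@ordS_inj k).

Definition first_ord (k : nat) (hk : (1 < k)%N) : 'I_k := Ordinal (ltnW hk).
Lemma last_ord_subproof (k : nat) (hk : (1 < k)%N) : (k.-1 < k)%N.
Proof. by case: k hk. Qed.
Definition last_ord (k : nat) (hk : (1 < k)%N) : 'I_k :=
  Ordinal (last_ord_subproof hk).

(* Entry (p, q) of the partial trace is a sum, over multi-indices a with
   a_K = p, of products of matrix entries.  For a cyclic permutation
   consecutive tensor factors share a summation index, so this is the path sum
   computing an entry of the ordered product of the X_i, in the order given by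
   the direction of the cycle.  A partial transpose on a traced-out factor j
   moves from the permutation onto the tensor product, where it transposes
   X_j.  On the kept factor it moves as well, at the price of transposing the
   result and reversing the operator product; the tensor product then stands
   left of the permutation, which relabels its factors along the cycle. *)

From mathcomp Require Import all_boot all_order all_algebra all_fingroup.
From mathcomp Require Import reals complex zify.
Set Implicit Arguments. Unset Strict Implicit. Unset Printing Implicit Defensive.
Import GRing.Theory.
Local Open Scope ring_scope.

Section InsertCoordinate.
Variable T : finType.

Definition ffun_insert n (i0 : 'I_n.+1) (x : T) (g : {ffun 'I_n -> T}) :
    {ffun 'I_n.+1 -> T} :=
  [ffun i => if unlift i0 i is Some j then g j else x].

Lemma ffun_insert_lift n (i0 : 'I_n.+1) x g j : ffun_insert i0 x g (lift i0 j) = g j.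
Proof. by rewrite ffunE liftK. Qed.

Lemma ffun_insert_at n (i0 : 'I_n.+1) x g : ffun_insert i0 x g i0 = x.
Proof. by rewrite ffunE unlift_none. Qed.

Lemma sum_ffun_fixed (R : nmodType) n (i0 : 'I_n.+1) x (F : {ffun 'I_n.+1 -> T} -> R) :
  \sum_(a : {ffun 'I_n.+1 -> T} | a i0 == x) F a
  = \sum_(g : {ffun 'I_n -> T}) F (ffun_insert i0 x g).
Proof.
rewrite (reindex (ffun_insert i0 x)) /=.
  by apply: eq_bigl => g; rewrite ffun_insert_at eqxx.
exists (fun a => [ffun j => a (lift i0 j)]).
  by move=> g _; apply/ffunP => j; rewrite ffunE ffun_insert_lift.
move=> a; rewrite inE => /eqP ax; apply/ffunP => i; rewrite ffunE.
by case: unliftP => [j ->|->]; rewrite ?ffunE // ax.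
Qed.

Lemma sum_ffunS (R : nmodType) n (F : {ffun 'I_n.+1 -> T} -> R) :
  \sum_(a : {ffun 'I_n.+1 -> T}) F a
  = \sum_x \sum_(g : {ffun 'I_n -> T}) F (ffun_insert ord0 x g).
Proof.
rewrite (partition_big (fun a : {ffun 'I_n.+1 -> T} => a ord0) xpredT) //=.
by apply: eq_bigr => x _; rewrite sum_ffun_fixed.
Qed.

End InsertCoordinate.

Section MatrixProductPaths.
Variables (C : comNzRingType) (d : nat).

Definition path_through n (p q : 'I_d) (f : {ffun 'I_n -> 'I_d}) (m : nat) : 'I_d :=
  nth q (p :: [seq f i | i <- enum 'I_n]) m.

Lemma path_through0 n p q (f : {ffun 'I_n -> 'I_d}) : path_through p q f 0 = p.
Proof. by []. Qed.

Lemma path_throughS n p q (f : {ffun 'I_n -> 'I_d}) (j : 'I_n) :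
  path_through p q f j.+1 = f j.
Proof. by rewrite /path_through /= (nth_map j) ?size_enum_ord // nth_ord_enum. Qed.

Lemma path_through_last n p q (f : {ffun 'I_n -> 'I_d}) : path_through p q f n.+1 = q.
Proof. by rewrite /path_through /= nth_default // size_map size_enum_ord. Qed.

Lemma mxprod_path_sum n (Y : nat -> 'M[C]_d) p q :
  mxprod (mkseq Y n.+1) p q =
  \sum_(f : {ffun 'I_n -> 'I_d})
     \prod_(m < n.+1) Y m (path_through p q f m) (path_through p q f m.+1).
Proof.
elim: n Y p => [|n IH] Y p.
  rewrite /mxprod /= mulmx1 (big_pred1 [ffun i => p]) => [|f].
    by rewrite big_ord1 path_through0 path_through_last.
  by symmetry; apply/eqP/ffunP => -[].
have -> : mkseq Y n.+2 = Y 0%N :: mkseq (fun m => Y m.+1) n.+1.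
  by rewrite /mkseq /= (iotaDl 1 1 n) -map_comp.
rewrite sum_ffunS /= mxE; apply: eq_bigr => x _.
rewrite IH mulr_sumr; apply: eq_bigr => g _.
have shift m : path_through p q (ffun_insert ord0 x g) m.+1 = path_through x q g m.
  rewrite /path_through /= enum_ordSl /= ffun_insert_at -map_comp.
  by congr (nth _ (_ :: _) _); apply: eq_map => i; exact: ffun_insert_lift.
rewrite [RHS]big_ord_recl /= shift; congr (_ * _); apply: eq_bigr => i _.
by rewrite /bump leq0n add1n !shift.
Qed.

End MatrixProductPaths.

Lemma ord_pred0 n : ord_pred (ord0 : 'I_n.+1) = ord_max.
Proof. by apply: val_inj; rewrite /= modn_small. Qed.

Lemma ord_pred_lift0 n (i : 'I_n) : ord_pred (lift ord0 i) = widen_ord (leqnSn n) i.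
Proof.
by apply: val_inj; rewrite /= add0n modnDr modn_small //; exact: leqW.
Qed.

Lemma ordS_max n : ordS (ord_max : 'I_n.+1) = ord0.
Proof. by apply: val_inj; rewrite /= modnn. Qed.

Lemma ordS_widen n (i : 'I_n) : ordS (widen_ord (leqnSn n) i) = lift ord0 i.
Proof. by apply: val_inj; rewrite /= modn_small // ltnS ltn_ord. Qed.

Lemma widen_ord_lift_max n (i : 'I_n) : widen_ord (leqnSn n) i = lift ord_max i.
Proof. by apply: val_inj; rewrite /= /bump leqNgt ltn_ord. Qed.

Lemma widen_ord_neq_max n (i : 'I_n) : widen_ord (leqnSn n) i != ord_max.
Proof. by rewrite -val_eqE /= ltn_eqF. Qed.

Lemma rev_ordS n (i : 'I_n.+1) : rev_ord (ordS (rev_ord i)) = ord_pred i.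
Proof.
apply: val_inj => /=; case: (unliftP ord0 i) => [j ->|->] /=; last first.
  by rewrite subn1 /= modnn modn_small // subn1.
move: (ltn_ord j) => /= ltjn.
rewrite modnDr /bump ?leq0n ?add1n !modn_small; lia.
Qed.

Lemma map_ord_pred_enum n :
  [seq ord_pred i | i <- enum 'I_n.+1] = ord_max :: [seq i <- enum 'I_n.+1 | i != ord_max].
Proof.
rewrite {1}enum_ordSl /= ord_pred0 enum_ordSr filter_rcons eqxx /= -map_comp.
rewrite (eq_map (@ord_pred_lift0 n)); congr (_ :: _).
by apply/esym/all_filterP/allP => _ /mapP[i _ ->]; exact: widen_ord_neq_max.
Qed.

Lemma map_ordS_enum n :
  [seq ordS i | i <- enum 'I_n.+1] = rcons [seq i <- enum 'I_n.+1 | i != ord0] ord0.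
Proof.
rewrite {1}enum_ordSr map_rcons ordS_max enum_ordSl /= -map_comp.
rewrite (eq_map (@ordS_widen n)); congr rcons.
by apply/esym/all_filterP/allP => _ /mapP[i _ ->]; rewrite eq_sym neq_lift.
Qed.

Lemma map_rev_ord_enum n : [seq rev_ord i | i <- enum 'I_n] = rev (enum 'I_n).
Proof.
case: n => [|n]; first by rewrite enum_ord0.
apply: (eq_from_nth (x0 := ord0)); first by rewrite size_map size_rev.
rewrite size_map size_enum_ord => i ltin.
rewrite nth_rev ?size_enum_ord // (nth_map ord0) ?size_enum_ord //.
have -> : i = Ordinal ltin by [].
have -> : (n.+1 - (Ordinal ltin).+1)%N = rev_ord (Ordinal ltin) by [].
by rewrite !nth_ord_enum.
Qed.

Section UpdateMultiIndex.
Variables d k : nat.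
Implicit Types a : midx d k.

Lemma upd_at a j x : upd a j x j = x.
Proof. by rewrite ffunE eqxx. Qed.

Lemma upd_other a j x i : i != j -> upd a j x i = a i.
Proof. by rewrite ffunE => /negbTE ->. Qed.

Lemma upd_upd a j x y : upd (upd a j x) j y = upd a j y.
Proof. by apply/ffunP => i; rewrite !ffunE; case: eqP. Qed.

Lemma upd_id a j : upd a j (a j) = a.
Proof. by apply/ffunP => i; rewrite !ffunE; case: eqP => // ->. Qed.

End UpdateMultiIndex.

Section CyclicChains.
Variables (C : comNzRingType) (d : nat).

Lemma sum_chain_pred n (Y : 'I_n.+1 -> 'M[C]_d) p q :
  \sum_(a : midx d n.+1 | a ord_max == p)
     \prod_(m < n.+1) Y m (a (ord_pred m)) (upd a ord_max q m)
  = mxprod [seq Y m | m <- enum 'I_n.+1] p q.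
Proof.
have -> : [seq Y m | m <- enum 'I_n.+1] = mkseq (fun m => Y (inord m)) n.+1.
  by rewrite /mkseq -val_enum_ord -map_comp; apply: eq_map => m /=; rewrite inord_val.
rewrite sum_ffun_fixed mxprod_path_sum; apply: eq_bigr => g _; apply: eq_bigr => m _.
rewrite inord_val; congr (Y m _ _).
  case: (unliftP ord0 m) => [i ->|->]; last by rewrite ord_pred0 ffun_insert_at.
  by rewrite ord_pred_lift0 widen_ord_lift_max ffun_insert_lift lift0 path_throughS.
case: (unliftP ord_max m) => [i ->|->]; last by rewrite upd_at path_through_last.
rewrite upd_other; last by rewrite eq_sym neq_lift.
by rewrite ffun_insert_lift lift_max path_throughS.
Qed.

Lemma sum_chain_succ n (Y : 'I_n.+1 -> 'M[C]_d) p q :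
  \sum_(a : midx d n.+1 | a ord0 == p)
     \prod_(m < n.+1) Y m (a (ordS m)) (upd a ord0 q m)
  = mxprod (rev [seq Y m | m <- enum 'I_n.+1]) p q.
Proof.
pose rev_idx (a : midx d n.+1) : midx d n.+1 := [ffun i => a (rev_ord i)].
have rev_idxK : involutive rev_idx.
  by move=> a; apply/ffunP => i; rewrite !ffunE rev_ordK.
have rev_ord0 : rev_ord ord0 = ord_max :> 'I_n.+1 by apply: val_inj; rewrite /= subn1.
rewrite (reindex_inj (can_inj rev_idxK)) /=.
rewrite -map_rev -map_rev_ord_enum -map_comp -sum_chain_pred.
apply: eq_big => [a|a _]; first by rewrite ffunE rev_ord0.
rewrite (reindex_inj rev_ord_inj) /=; apply: eq_bigr => m _.
rewrite ffunE rev_ordS; congr (Y _ _ _).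
by rewrite !ffunE -(inj_eq rev_ord_inj) rev_ord0 rev_ordK; case: eqP.
Qed.

End CyclicChains.

Section Operators.
Variables (C : comNzRingType) (d k : nat).
Implicit Types (M N : op C d k) (Y : 'I_k -> 'M[C]_d) (s : {perm 'I_k}).

Definition trmx_at (j : 'I_k) Y i := if i == j then (Y i)^T else Y i.

Lemma trmx_at_id j Y : trmx_at j Y j = (Y j)^T.
Proof. by rewrite /trmx_at eqxx. Qed.

Lemma trmx_at_other j Y i : i != j -> trmx_at j Y i = Y i.
Proof. by rewrite /trmx_at => /negbTE ->. Qed.

Lemma op_mul_eq2 M M' N N' : M =2 M' -> N =2 N' -> op_mul M N =2 op_mul M' N'.
Proof. by move=> eqM eqN a c; apply: eq_bigr => b _; rewrite eqM eqN. Qed.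

Lemma ptrace_except_eq2 K M N : M =2 N -> ptrace_except K M = ptrace_except K N.
Proof. by move=> eqMN; apply/matrixP => p q; rewrite !mxE; apply: eq_bigr. Qed.

Lemma op_mul_perm_l s N a c : op_mul (perm_op C s) N a c = N [ffun i => a (s i)] c.
Proof.
rewrite /op_mul (bigD1 [ffun i => a (s i)]) //= big1 ?addr0.
  rewrite /perm_op; case: forallP => [_|[]]; first by rewrite mul1r.
  by move=> i; rewrite ffunE permKV.
move=> b nb; rewrite /perm_op; case: forallP => [ab|_]; last by rewrite mul0r.
case/eqP: nb; apply/ffunP => i; rewrite ffunE.
by have := ab (s i); rewrite permK => /eqP ->.
Qed.

Lemma op_mul_perm_r M s a c :
  op_mul M (perm_op C s) a c = M a [ffun i => c ((s^-1)%g i)].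
Proof.
rewrite /op_mul (bigD1 [ffun i => c ((s^-1)%g i)]) //= big1 ?addr0.
  rewrite /perm_op; case: forallP => [_|[]]; first by rewrite mulr1.
  by move=> i; rewrite ffunE.
move=> b nb; rewrite /perm_op; case: forallP => [bc|_]; last by rewrite mulr0.
by case/eqP: nb; apply/ffunP => i; rewrite ffunE; apply/eqP/bc.
Qed.

Lemma op_mul_tensor_perm Y s :
  op_mul (tensor Y) (perm_op C s) =2 op_mul (perm_op C s) (tensor (Y \o s)).
Proof.
move=> a c; rewrite op_mul_perm_r op_mul_perm_l /tensor.
rewrite (reindex_inj (@perm_inj _ s)) /=; apply: eq_bigr => i _.
by rewrite !ffunE permK.
Qed.

Lemma ptrans_tensor j Y : ptrans j (tensor Y) =2 tensor (trmx_at j Y).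
Proof.
move=> a b; apply: eq_bigr => i _; rewrite /trmx_at !ffunE.
by case: eqP => [->|]; rewrite ?mxE.
Qed.

(* Swapping the j-th entries of the two summation indices moves the partial
   transpose from one factor to the other. *)
Lemma ptrace_except_ptransC j K M N : j != K ->
  ptrace_except K (op_mul (ptrans j M) N) = ptrace_except K (op_mul M (ptrans j N)).
Proof.
move=> njK; have nKj : K != j by rewrite eq_sym.
apply/matrixP => p q; rewrite !mxE /op_mul !pair_big_dep /=.
pose sw (x : midx d k * midx d k) := (upd x.1 j (x.2 j), upd x.2 j (x.1 j)).
have swK : involutive sw by move=> [a b]; rewrite /sw /= !upd_at !upd_upd !upd_id.
rewrite [RHS](reindex_inj (can_inj swK)) /=.
apply: eq_big => [[a b]|[a b] _] /=; first by rewrite upd_other.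
rewrite /ptrans; congr (_ * _); congr (N _ _).
  by rewrite upd_upd (upd_other _ _ njK) upd_at upd_id.
apply/ffunP => i; rewrite upd_at !ffunE; case: (eqVneq i j) => [->|//].
by rewrite (negbTE njK).
Qed.

(* Exchange the two summation indices, and the values p and q of the kept
   index. *)
Lemma ptrace_except_ptrans_self K M N :
  ptrace_except K (op_mul (ptrans K M) N) = (ptrace_except K (op_mul (ptrans K N) M))^T.
Proof.
apply/matrixP => p q; rewrite !mxE /op_mul !pair_big_dep /=.
pose sw (x : 'I_d) := if x == p then q else if x == q then p else x.
have swK : involutive sw.
  move=> x; rewrite /sw; case: (eqVneq x p) => [->|nxp]; first by rewrite eqxx; case: eqP.
  case: (eqVneq x q) => [->|nxq]; first by rewrite eqxx.
  by rewrite (negbTE nxp) (negbTE nxq).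
have swq x : (sw x == q) = (x == p).
  rewrite /sw; case: (eqVneq x p) => [_|nxp]; first by rewrite !eqxx.
  case: (eqVneq x q) => [exq|nxq] /=; first by rewrite -exq eq_sym (negbTE nxp).
  by rewrite (negbTE nxq).
pose h (x : midx d k * midx d k) := (upd x.2 K (sw (x.1 K)), upd x.1 K (x.2 K)).
have hK : involutive h by move=> [a b]; rewrite /h /= !upd_at !upd_upd swK !upd_id.
rewrite [RHS](reindex_inj (can_inj hK)) /=.
apply: eq_big => [[a b]|[a b]] /=; first by rewrite !andbT upd_at swq.
rewrite andbT => /eqP aK.
rewrite /ptrans /= mulrC aK /sw eqxx !upd_at !upd_upd upd_id.
by congr (_ * _); congr (M _ _); rewrite -{2}aK upd_id.
Qed.

Lemma ptrace_ptrans_tensor j K M Y : j != K ->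
  ptrace_except K (op_mul (ptrans j M) (tensor Y))
  = ptrace_except K (op_mul M (tensor (trmx_at j Y))).
Proof.
move=> njK; rewrite ptrace_except_ptransC //.
by apply: ptrace_except_eq2; apply: op_mul_eq2 => // a b; exact: ptrans_tensor.
Qed.

Lemma ptrace_ptrans_self_tensor K M Y :
  ptrace_except K (op_mul (ptrans K M) (tensor Y))
  = (ptrace_except K (op_mul (tensor (trmx_at K Y)) M))^T.
Proof.
rewrite ptrace_except_ptrans_self; congr (_^T).
by apply: ptrace_except_eq2; apply: op_mul_eq2 => // a b; exact: ptrans_tensor.
Qed.

End Operators.

Section CyclePermutations.
Variables (C : comNzRingType) (d n : nat).
Implicit Types Y : 'I_n.+1 -> 'M[C]_d.

Lemma cycle_upE i : cycle_up n.+1 i = ordS i.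
Proof. by rewrite permE. Qed.

Lemma cycle_upVE i : ((cycle_up n.+1)^-1)%g i = ord_pred i.
Proof. by apply: (@perm_inj _ (cycle_up n.+1)); rewrite permKV cycle_upE ord_predK. Qed.

Lemma ptrace_cycle_down_tensor Y :
  ptrace_except ord_max (op_mul (perm_op C ((cycle_up n.+1)^-1)%g) (tensor Y))
  = mxprod [seq Y i | i <- enum 'I_n.+1].
Proof.
apply/matrixP => p q; rewrite mxE -sum_chain_pred; apply: eq_bigr => a _.
by rewrite op_mul_perm_l; apply: eq_bigr => m _; rewrite ffunE cycle_upVE.
Qed.

Lemma ptrace_cycle_up_tensor Y :
  ptrace_except ord0 (op_mul (perm_op C (cycle_up n.+1)) (tensor Y))
  = mxprod (rev [seq Y i | i <- enum 'I_n.+1]).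
Proof.
apply/matrixP => p q; rewrite mxE -sum_chain_succ; apply: eq_bigr => a _.
by rewrite op_mul_perm_l; apply: eq_bigr => m _; rewrite ffunE cycle_upE.
Qed.

Lemma ptrace_tensor_cycle_down Y :
  ptrace_except ord_max (op_mul (tensor Y) (perm_op C ((cycle_up n.+1)^-1)%g))
  = Y ord_max *m mxprod [seq Y i | i <- enum 'I_n.+1 & i != ord_max].
Proof.
rewrite (ptrace_except_eq2 _ (op_mul_tensor_perm _ _)) ptrace_cycle_down_tensor.
rewrite (eq_map (_ : Y \o _ =1 Y \o @ord_pred n.+1)) => [|i]; last first.
  by rewrite /= cycle_upVE.
by rewrite map_comp map_ord_pred_enum.
Qed.

Lemma ptrace_tensor_cycle_up Y :
  ptrace_except ord0 (op_mul (tensor Y) (perm_op C (cycle_up n.+1)))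
  = Y ord0 *m mxprod (rev [seq Y i | i <- enum 'I_n.+1 & i != ord0]).
Proof.
rewrite (ptrace_except_eq2 _ (op_mul_tensor_perm _ _)) ptrace_cycle_up_tensor.
rewrite (eq_map (_ : Y \o _ =1 Y \o @ordS n.+1)) => [|i]; last first.
  by rewrite /= cycle_upE.
by rewrite map_comp map_ordS_enum map_rcons rev_rcons.
Qed.

End CyclePermutations.

Theorem proposition3 (R : realType) (d k : nat) (hk : (1 < k)%N)
    (X : 'I_k -> 'M[R[i]]_d) (j : 'I_k) :
  (* first identity: cycle (k k-1 ... 1) = (1 2 ... k)^-1, keep factor k *)
  ptrace_except (last_ord hk)
      (op_mul (ptrans j (@perm_op R[i] d k ((cycle_up k)^-1)%g)) (tensor X))
    = (if j != last_ord hk then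
         mxprod [seq (if i == j then (X i)^T else X i) | i <- enum 'I_k]
       else
         (mxprod [seq X i | i <- enum 'I_k & i != last_ord hk])^T
           *m X (last_ord hk))
  /\
  (* second identity: cycle (1 2 ... k), keep factor 1 *)
  ptrace_except (first_ord hk)
      (op_mul (ptrans j (@perm_op R[i] d k (cycle_up k))) (tensor X))
    = (if j != first_ord hk then
         mxprod (rev [seq (if i == j then (X i)^T else X i) | i <- enum 'I_k])
       else
         (mxprod (rev [seq X i | i <- enum 'I_k & i != first_ord hk]))^T
           *m X (first_ord hk)).
Proof.
case: k hk X j => [|n] // hk X j.
have -> : last_ord hk = ord_max by apply: val_inj.
have -> : first_ord hk = ord0 by apply: val_inj.
have untransposed K : [seq trmx_at K X i | i <- enum 'I_n.+1 & i != K]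
                        = [seq X i | i <- enum 'I_n.+1 & i != K].
  by apply/eq_in_map => i; rewrite mem_filter => /andP[/trmx_at_other].
split.
- case: (eqVneq j ord_max) => [->|njK] /=.
    rewrite ptrace_ptrans_self_tensor ptrace_tensor_cycle_down.
    by rewrite trmx_mul trmx_at_id trmxK untransposed.
  by rewrite ptrace_ptrans_tensor // ptrace_cycle_down_tensor.
- case: (eqVneq j ord0) => [->|njK] /=.
    rewrite ptrace_ptrans_self_tensor ptrace_tensor_cycle_up.
    by rewrite trmx_mul trmx_at_id trmxK untransposed.
  by rewrite ptrace_ptrans_tensor // ptrace_cycle_up_tensor.
Qed.
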